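(* Let $c>0$, $n\ge 2$, and let $\mathbb{R}^n_c=\{\mathbf{v}\in\mathbb{R}^n:\|\mathbf{v}\|<c\}$ be equipped with Möbius addition $\oplus$, Möbius scalar multiplication $\otimes$ and Möbius coaddition $\boxplus$ (defined in the context). Let $C,D\in\mathbb{R}^n_c$ be distinct and let $L_{CD}(t)=C\oplus\big((\ominus C\oplus D)\otimes t\big)$, $t\in\mathbb{R}$, be the Möbius gyroline through $C$ and $D$. Then the supporting chord of this gyroline is the set $\{C\boxplus L_{CD}(t):t\in\mathbb{R}\}$. Furthermore, this supporting chord passes through the points $$P_1=C\boxplus C=2\otimes C,\qquad P_2=D\boxplus D=2\otimes D,\qquad P_3=C\boxplus D.$$
   Context: Möbius addition in the ball $\mathbb{R}^n_c$ is $$\mathbf{u}\oplus\mathbf{v}=\frac{\big(1+\frac{2}{c^2}\mathbf{u}\cdot\mathbf{v}+\frac{1}{c^2}\|\mathbf{v}\|^2\big)\mathbf{u}+\big(1-\frac{1}{c^2}\|\mathbf{u}\|^2\big)\mathbf{v}}{1+\frac{2}{c^2}\mathbf{u}\cdot\mathbf{v}+\frac{1}{c^4}\|\mathbf{u}\|^2\|\mathbf{v}\|^2},$$ with $\ominus\mathbf{v}=-\mathbf{v}$. Scalar multiplication: for $r\in\mathbb{R}$ and $\mathbf{v}\neq\mathbf{0}$, $r\otimes\mathbf{v}=\mathbf{v}\otimes r=c\tanh\!\big(r\tanh^{-1}(\|\mathbf{v}\|/c)\big)\frac{\mathbf{v}}{\|\mathbf{v}\|}$, and $r\otimes\mathbf{0}=\mathbf{0}$.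 The gyration generated by $\mathbf{u},\mathbf{v}$ is $\mathrm{gyr}[\mathbf{u},\mathbf{v}]\mathbf{w}=\ominus(\mathbf{u}\oplus\mathbf{v})\oplus\big(\mathbf{u}\oplus(\mathbf{v}\oplus\mathbf{w})\big)$, and Möbius coaddition is $\mathbf{a}\boxplus\mathbf{b}=\mathbf{a}\oplus\mathrm{gyr}[\mathbf{a},\ominus\mathbf{b}]\mathbf{b}$. A Möbius gyroline $L_{CD}$ is (the intersection with the ball of) a Euclidean circular arc or diameter meeting the boundary sphere $\|\mathbf{x}\|=c$ at two endpoints $\lim_{t\to\pm\infty}L_{CD}(t)$; its supporting chord is the set of points of the open ball $\mathbb{R}^n_c$ lying on the Euclidean straight line through these two endpoints. *)

From HB Require Import structures.
From mathcomp Require Import all_boot all_order all_algebra.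
From mathcomp Require Import all_classical all_reals all_analysis.
Set Implicit Arguments. Unset Strict Implicit. Unset Printing Implicit Defensive.
Import Order.TTheory GRing.Theory Num.Theory.
Import numFieldNormedType.Exports.
Local Open Scope classical_set_scope.
Local Open Scope ring_scope.

Definition dotv (R : realType) (n : nat) (u v : 'rV[R]_n) : R :=
  \sum_(i < n) u 0 i * v 0 i.
Definition enorm (R : realType) (n : nat) (v : 'rV[R]_n) : R :=
  Num.sqrt (dotv v v).

Definition ball_c (R : realType) (n : nat) (c : R) : set 'rV[R]_n :=
  [set v | enorm v < c].

Definition tanhR (R : realType) (x : R) : R :=
  (expR x - expR (- x)) / (expR x + expR (- x)).
Definition artanhR (R : realType) (y : R) : R := ln ((1 + y) / (1 - y)) / 2.

Definition mob_add (R : realType) (n : nat) (c : R) (u v : 'rV[R]_n) : 'rV[R]_n :=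
  (1 + 2 / c ^+ 2 * dotv u v + 1 / c ^+ 4 * dotv u u * dotv v v)^-1 *:
  ((1 + 2 / c ^+ 2 * dotv u v + 1 / c ^+ 2 * dotv v v) *: u
    + (1 - 1 / c ^+ 2 * dotv u u) *: v).

Definition mob_opp (R : realType) (n : nat) (v : 'rV[R]_n) : 'rV[R]_n := - v.

Definition mob_scale (R : realType) (n : nat) (c : R) (r : R) (v : 'rV[R]_n)
  : 'rV[R]_n :=
  if v == 0 then 0
  else (c * tanhR (r * artanhR (enorm v / c)) / enorm v) *: v.

Definition gyr (R : realType) (n : nat) (c : R) (u v w : 'rV[R]_n) : 'rV[R]_n :=
  mob_add c (mob_opp (mob_add c u v)) (mob_add c u (mob_add c v w)).

Definition mob_coadd (R : realType) (n : nat) (c : R) (a b : 'rV[R]_n) : 'rV[R]_n :=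
  mob_add c a (gyr c a (mob_opp b) b).

Definition gyroline (R : realType) (n : nat) (c : R) (C D : 'rV[R]_n) (t : R)
  : 'rV[R]_n :=
  mob_add c C (mob_scale c t (mob_add c (mob_opp C) D)).

Definition supp_chord (R : realType) (n : nat) (c : R) (E1 E2 : 'rV[R]_n)
  : set 'rV[R]_n :=
  [set x | enorm x < c /\ exists s : R, x = E1 + s *: (E2 - E1)].

From HB Require Import structures.
From mathcomp Require Import all_boot all_order all_algebra.
From mathcomp Require Import all_classical all_reals all_analysis.
From mathcomp Require Import ring lra.
Import Order.TTheory GRing.Theory Num.Theory.
Import numFieldNormedType.Exports.
Local Open Scope classical_set_scope.
Local Open Scope ring_scope.
Set Implicit Arguments. Unset Strict Implicit. Unset Printing Implicit Defensive.

(* Put a := (-C) (+) D and u := (c / |a|) a, so that |u| = c and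
   L_CD(t) = C (+) tanh(al t) u with al = artanh(|a| / c).  In the basis (C, u)
   the points C (+) x u are rational in x, and so are C [+] (C (+) x u) by the
   coaddition formula
     a [+] b = ((1 - |b|^2/c^2) a + (1 - |a|^2/c^2) b) / (1 - |a|^2 |b|^2 / c^4).
   Letting x -> -1, 1 gives the endpoints E- = C (+) (-u) and E+ = C (+) u,
   which lie on the sphere |x| = c, and C [+] (C (+) x u) = E- + s(x) (E+ - E-)
   for a Moebius transformation s mapping (-1, 1) onto (0, 1).  As
   |E- + s (E+ - E-)| < c exactly when 0 < s < 1, these points fill the
   supporting chord.  The three special points are x = 0, x = |a|/c (which gives
   C [+] D), and D [+] D = 2 (x) D = C [+] (C (+) (2y / (1 + y^2)) u) for
   D = C (+) y u. *)

Section InnerProduct.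
Variables (R : realType) (n : nat).
Implicit Types (u v w P Q : 'rV[R]_n).

Lemma dotvC u v : dotv u v = dotv v u.
Proof. by apply: eq_bigr => i _; rewrite mulrC. Qed.

Lemma dotvDl u v w : dotv (u + v) w = dotv u w + dotv v w.
Proof. by rewrite /dotv -big_split; apply: eq_bigr => i _; rewrite mxE mulrDl. Qed.

Lemma dotvZl k u w : dotv (k *: u) w = k * dotv u w.
Proof. by rewrite /dotv mulr_sumr; apply: eq_bigr => i _; rewrite mxE mulrA. Qed.

Lemma dotvDr u v w : dotv w (u + v) = dotv w u + dotv w v.
Proof. by rewrite dotvC dotvDl !(dotvC w). Qed.

Lemma dotvZr k u w : dotv w (k *: u) = k * dotv w u.
Proof. by rewrite dotvC dotvZl dotvC. Qed.

Lemma dotvNl u w : dotv (- u) w = - dotv u w.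
Proof. by rewrite -scaleN1r dotvZl mulN1r. Qed.

Lemma dotvNr u w : dotv w (- u) = - dotv w u.
Proof. by rewrite -scaleN1r dotvZr mulN1r. Qed.

Lemma dotvNN u : dotv (- u) (- u) = dotv u u.
Proof. by rewrite dotvNl dotvNr opprK. Qed.

Lemma dotv0r w : dotv w 0 = 0.
Proof. by rewrite -(scale0r 0) dotvZr mul0r. Qed.

Lemma dotvv_ge0 v : 0 <= dotv v v.
Proof. by apply: sumr_ge0 => i _; rewrite -expr2 sqr_ge0. Qed.

Lemma dotvv_eq0 v : dotv v v = 0 -> v = 0.
Proof.
move=> /eqP; rewrite /dotv psumr_eq0 => [/allP v0|i _]; last by rewrite -expr2 sqr_ge0.
apply/rowP => i; rewrite mxE; apply/eqP.
by have := v0 i (mem_index_enum _); rewrite mulf_eq0 orbb.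
Qed.

Lemma enorm_sqr v : enorm v ^+ 2 = dotv v v.
Proof. by rewrite sqr_sqrtr // dotvv_ge0. Qed.

Lemma enorm_gt0 v : v != 0 -> 0 < enorm v.
Proof.
move=> v0; rewrite sqrtr_gt0 lt_def dotvv_ge0 andbT.
by apply: contra v0 => /eqP /dotvv_eq0 ->.
Qed.

Lemma enorm_lt (c : R) v : 0 < c -> (enorm v < c) = (dotv v v < c ^+ 2).
Proof.
move=> c0; rewrite /enorm -{1}(gtr0_norm c0) -sqrtr_sqr.
by rewrite ltr_sqrt ?exprn_gt0.
Qed.

Lemma dotv_segment (c s : R) P Q : dotv P P = c ^+ 2 -> dotv Q Q = c ^+ 2 ->
  dotv (P + s *: (Q - P)) (P + s *: (Q - P)) =
  c ^+ 2 - 2 * s * (1 - s) * (c ^+ 2 - dotv P Q).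
Proof.
move=> PP QQ; rewrite !(dotvDl, dotvDr, dotvZl, dotvZr, dotvNl, dotvNr).
by rewrite (dotvC Q P) PP QQ; ring.
Qed.

Definition lincomb (x y : 'rV[R]_n) (p q : R) := p *: x + q *: y.

Lemma dotv_lincomb x y p1 q1 p2 q2 :
  dotv (lincomb x y p1 q1) (lincomb x y p2 q2) =
  p1 * p2 * dotv x x + (p1 * q2 + q1 * p2) * dotv x y + q1 * q2 * dotv y y.
Proof. by rewrite !(dotvDl, dotvDr, dotvZl, dotvZr) (dotvC y x); ring. Qed.

End InnerProduct.

Ltac nonzero := repeat (apply/andP; split); try (apply: lt0r_neq0); try lra; try nra.

Section HyperbolicTangent.
Variable R : realType.
Implicit Types x y : R.

Lemma tanhRE x : tanhR x = 2 / (1 + expR (- (2 * x))) - 1.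
Proof.
have ex0 := expR_gt0 x.
rewrite (_ : - (2 * x) = - x + - x) ?expRD /tanhR ?expRN; last by ring.
by field; nonzero.
Qed.

Lemma tanhRN x : tanhR (- x) = - tanhR x.
Proof. by rewrite /tanhR opprK -mulNr opprB (addrC (expR x)). Qed.

Lemma tanhR_cvgy : tanhR x @[x --> +oo] --> (1 : R).
Proof.
have e0 : expR (- (2 * x)) @[x --> +oo] --> (0 : R).
  by apply: (cvg_comp _ _ _ (@cvgr_expR R)); exact: gt0_cvgMry cvg_id.
rewrite (_ : @tanhR R = fun x => 2 / (1 + expR (- (2 * x))) - 1); last exact/funext/tanhRE.
rewrite -[X in _ --> X](_ : 2 / (1 + 0) - 1 = 1 :> R); last by rewrite addr0 divr1; ring.
apply: cvgB; last exact: cvg_cst.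
apply: cvgM; first exact: cvg_cst.
by apply: cvgV; [rewrite addr0 oner_neq0 | apply: cvgD => //; exact: cvg_cst].
Qed.

Lemma tanhR_cvgNy : tanhR x @[x --> -oo] --> (-1 : R).
Proof.
apply/cvgNy_compNP; rewrite (_ : @tanhR R \o -%R = fun x => - tanhR x).
  exact: cvgN tanhR_cvgy.
by apply/funext => x /=; rewrite tanhRN.
Qed.

Lemma tanhR_sqr_lt1 x : tanhR x ^+ 2 < 1.
Proof.
rewrite tanhRE; have e0 := expR_gt0 (- (2 * x)).
have h1 : 0 < 2 / (1 + expR (- (2 * x))) by apply: divr_gt0; lra.
have h2 : 2 / (1 + expR (- (2 * x))) < 2.
  by rewrite ltr_pdivrMr; lra.
rewrite expr2; nra.
Qed.

Lemma expR_2artanhR y : -1 < y < 1 -> expR (2 * artanhR y) = (1 + y) / (1 - y).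
Proof.
case/andP => y1 y2; rewrite /artanhR mulrC divfK ?pnatr_eq0 // lnK // posrE.
by apply: divr_gt0; lra.
Qed.

Lemma tanhR_artanhR y : -1 < y < 1 -> tanhR (artanhR y) = y.
Proof.
move=> y11; rewrite tanhRE expRN expR_2artanhR //; case/andP: y11 => y1 y2.
by field; nonzero.
Qed.

Lemma tanhR_2artanhR y : -1 < y < 1 -> tanhR (2 * artanhR y) = 2 * y / (1 + y ^+ 2).
Proof.
move=> y11; rewrite tanhRE.
rewrite (_ : - _ = - (2 * artanhR y) + - (2 * artanhR y)); last by ring.
rewrite expRD expRN expR_2artanhR //.
case/andP: y11 => y1 y2.
by field; nonzero.
Qed.

Lemma artanhR_gt0 y : 0 < y < 1 -> 0 < artanhR y.
Proof.
case/andP => y0 y1; apply: divr_gt0 => //.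
by apply: ln_gt0; rewrite ltr_pdivlMr; lra.
Qed.

End HyperbolicTangent.

Lemma div1_expr4 (R : realType) (c : R) : 1 / c ^+ 4 = (c ^+ 2)^-1 ^+ 2.
Proof. by rewrite mul1r exprVn -exprM. Qed.

(* [field] leaves side conditions that are polynomial in [c]; abstracting
   [e := c^-2] first keeps them within reach of [nonzero]. *)
Ltac field_invc2 c :=
  rewrite ?div1_expr4;
  have : 0 < (c ^+ 2)^-1 by [rewrite invr_gt0 exprn_gt0];
  repeat match goal with H : context [(c ^+ 2)^-1] |- _ => revert H end;
  generalize ((c ^+ 2)^-1) => e; intros; field; nonzero.

Section MobiusAddition.
Variables (R : realType) (n : nat) (c : R).
Hypothesis c_gt0 : 0 < c.
Implicit Types (a b u v : 'rV[R]_n).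

Definition mob_den u v :=
  1 + 2 / c ^+ 2 * dotv u v + 1 / c ^+ 4 * dotv u u * dotv v v.

Lemma mob_addE u v :
  mob_add c u v = lincomb u v
    ((1 + 2 / c ^+ 2 * dotv u v + 1 / c ^+ 2 * dotv v v) / mob_den u v)
    ((1 - 1 / c ^+ 2 * dotv u u) / mob_den u v).
Proof. by apply/rowP => i; rewrite !mxE; ring. Qed.

Lemma mob_add_lincomb x y p1 q1 p2 q2 r1 r2
    (u := lincomb x y p1 q1) (v := lincomb x y p2 q2) :
  mob_den u v != 0 ->
  (1 + 2 / c ^+ 2 * dotv u v + 1 / c ^+ 2 * dotv v v) * p1
    + (1 - 1 / c ^+ 2 * dotv u u) * p2 = r1 * mob_den u v ->
  (1 + 2 / c ^+ 2 * dotv u v + 1 / c ^+ 2 * dotv v v) * q1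
    + (1 - 1 / c ^+ 2 * dotv u u) * q2 = r2 * mob_den u v ->
  mob_add c u v = lincomb x y r1 r2.
Proof.
move=> d0 E1 E2; rewrite mob_addE -[r1](mulfK d0) -[r2](mulfK d0) -E1 -E2.
rewrite /u /v /lincomb; apply/rowP => i; rewrite !mxE; field.
by apply/andP; split; [exact: d0 | exact: lt0r_neq0].
Qed.

Lemma mob_addr0 a : mob_add c a 0 = a.
Proof.
rewrite /mob_add !dotv0r; apply/rowP => i; rewrite !mxE.
by rewrite !(mulr0, addr0) invr1 !mul1r.
Qed.

Lemma mob_addNr b : mob_add c (- b) b = 0.
Proof. by rewrite /mob_add dotvNN dotvNl; apply/rowP => i; rewrite !mxE; ring. Qed.

Lemma mob_den_gt0 u v :
  dotv u u < c ^+ 2 -> dotv v v < c ^+ 2 -> 0 < mob_den u v.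
Proof.
move=> uc vc; have c2 : 0 < c ^+ 2 := exprn_gt0 2 c_gt0.
have -> : mob_den u v = (1 - dotv u u / c ^+ 2) * (1 - dotv v v / c ^+ 2)
                        + dotv (u + v) (u + v) / c ^+ 2.
  by rewrite /mob_den !(dotvDl, dotvDr) (dotvC v u); field; rewrite gt_eqF.
apply: ltr_pwDl; last by rewrite divr_ge0 ?dotvv_ge0 ?ltW.
by apply: mulr_gt0; rewrite subr_gt0 ltr_pdivrMr // mul1r.
Qed.

Lemma mob_add_ballE u v :
  dotv u u < c ^+ 2 -> dotv v v < c ^+ 2 ->
  1 - dotv (mob_add c u v) (mob_add c u v) / c ^+ 2 =
  (1 - dotv u u / c ^+ 2) * (1 - dotv v v / c ^+ 2) / mob_den u v.
Proof.
move=> uc vc; have d0 := mob_den_gt0 uc vc.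
rewrite mob_addE dotv_lincomb /mob_den div1_expr4 in d0 *.
by field_invc2 c.
Qed.

Lemma mob_add_ball u v :
  dotv u u < c ^+ 2 -> dotv v v < c ^+ 2 ->
  dotv (mob_add c u v) (mob_add c u v) < c ^+ 2.
Proof.
move=> uc vc; have c2 : 0 < c ^+ 2 := exprn_gt0 2 c_gt0.
have : 0 < 1 - dotv (mob_add c u v) (mob_add c u v) / c ^+ 2.
  rewrite mob_add_ballE //; apply: divr_gt0; last exact: mob_den_gt0.
  by apply: mulr_gt0; rewrite subr_gt0 ltr_pdivrMr // mul1r.
by rewrite subr_gt0 ltr_pdivrMr // mul1r.
Qed.

Lemma mob_addNKr a b :
  dotv a a < c ^+ 2 -> dotv b b < c ^+ 2 -> mob_add c a (mob_add c (- a) b) = b.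
Proof.
move=> ac bc; have c2 : 0 < c ^+ 2 := exprn_gt0 2 c_gt0.
have Nac : dotv (- a) (- a) < c ^+ 2 by rewrite dotvNN.
have d1 := mob_den_gt0 Nac bc.
have d2 := mob_den_gt0 ac (mob_add_ball Nac bc).
have ea : a = lincomb a b 1 0 by rewrite /lincomb scale1r scale0r addr0.
have eb : b = lincomb a b 0 1 by rewrite /lincomb scale0r add0r scale1r.
have eNa : - a = lincomb a b (-1) 0 by rewrite /lincomb scale0r addr0 scaleN1r.
move: d1; rewrite /mob_den dotvNl dotvNN div1_expr4 => d1.
set d := 1 + 2 / c ^+ 2 * - dotv a b + (c ^+ 2)^-1 ^+ 2 * dotv a a * dotv b b.
have E : mob_add c (- a) b = lincomb a b
    (- (1 - 2 * (dotv a b / c ^+ 2) + dotv b b / c ^+ 2) / d)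
    ((1 - dotv a a / c ^+ 2) / d).
  rewrite eNa [X in mob_add _ _ X]eb; apply: mob_add_lincomb.
  - by rewrite -eNa -eb /mob_den dotvNl dotvNN div1_expr4 gt_eqF.
  - by rewrite /d /mob_den !dotv_lincomb; field_invc2 c.
  - by rewrite /d /mob_den !dotv_lincomb; field_invc2 c.
rewrite E in d2 *; rewrite [X in mob_add _ X]ea [RHS]eb; apply: mob_add_lincomb.
- by rewrite -ea gt_eqF.
- by rewrite /d /mob_den !dotv_lincomb; field_invc2 c.
- by rewrite /d /mob_den !dotv_lincomb; field_invc2 c.
Qed.

Lemma mob_coaddE a b : dotv a a < c ^+ 2 -> dotv b b < c ^+ 2 ->
  mob_coadd c a b = lincomb a b
    ((1 - dotv b b / c ^+ 2) / (1 - dotv a a / c ^+ 2 * (dotv b b / c ^+ 2)))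
    ((1 - dotv a a / c ^+ 2) / (1 - dotv a a / c ^+ 2 * (dotv b b / c ^+ 2))).
Proof.
move=> ac bc; have c2 : 0 < c ^+ 2 := exprn_gt0 2 c_gt0.
have A1 : 0 < 1 - dotv a a / c ^+ 2 by rewrite subr_gt0 ltr_pdivrMr // mul1r.
have B1 : 0 < 1 - dotv b b / c ^+ 2 by rewrite subr_gt0 ltr_pdivrMr // mul1r.
have A0 : 0 <= dotv a a / c ^+ 2 by rewrite divr_ge0 ?dotvv_ge0 ?ltW.
have B0 : 0 <= dotv b b / c ^+ 2 by rewrite divr_ge0 ?dotvv_ge0 ?ltW.
have AB1 : 0 < 1 - dotv a a / c ^+ 2 * (dotv b b / c ^+ 2) by nra.
have Nbc : dotv (- b) (- b) < c ^+ 2 by rewrite dotvNN.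
have d1 := mob_den_gt0 ac Nbc.
(* [gyr[a, -b] b = -(a (+) -b) (+) a] since [-b (+) b = 0] *)
rewrite /mob_coadd /gyr /mob_opp mob_addNr mob_addr0.
have ea : a = lincomb a b 1 0 by rewrite /lincomb scale1r scale0r addr0.
have eNb : - b = lincomb a b 0 (-1) by rewrite /lincomb scale0r add0r scaleN1r.
move: d1; rewrite /mob_den dotvNr dotvNN div1_expr4 => d1.
set d := 1 + 2 / c ^+ 2 * - dotv a b + (c ^+ 2)^-1 ^+ 2 * dotv a a * dotv b b.
have Ew : mob_add c a (- b) = lincomb a b
    ((1 - 2 * (dotv a b / c ^+ 2) + dotv b b / c ^+ 2) / d)
    (- (1 - dotv a a / c ^+ 2) / d).
  rewrite {1}ea eNb; apply: mob_add_lincomb.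
  - by rewrite -ea -eNb /mob_den dotvNr dotvNN div1_expr4 gt_eqF.
  - by rewrite /d /mob_den !dotv_lincomb; field_invc2 c.
  - by rewrite /d /mob_den !dotv_lincomb; field_invc2 c.
have wc : dotv (- mob_add c a (- b)) (- mob_add c a (- b)) < c ^+ 2.
  by rewrite dotvNN; exact: mob_add_ball.
have d2 := mob_den_gt0 wc ac.
have zc := mob_add_ball wc ac.
have d3 := mob_den_gt0 ac zc.
have Ez : mob_add c (- mob_add c a (- b)) a = lincomb a b
    (- 2 * (dotv b b / c ^+ 2) * (1 - dotv a b / c ^+ 2) / d)
    ((1 - dotv a a / c ^+ 2 * (dotv b b / c ^+ 2)) / d).
  have ENw : - mob_add c a (- b) = lincomb a b
      (- ((1 - 2 * (dotv a b / c ^+ 2) + dotv b b / c ^+ 2) / d))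
      (- (- (1 - dotv a a / c ^+ 2) / d)).
    by rewrite Ew /lincomb; apply/rowP => i; rewrite !mxE; ring.
  rewrite ENw [X in mob_add _ _ X]ea; apply: mob_add_lincomb.
  - by rewrite -ENw -ea gt_eqF.
  - by rewrite /d /mob_den !dotv_lincomb; field_invc2 c.
  - by rewrite /d /mob_den !dotv_lincomb; field_invc2 c.
rewrite Ez in d3 *; rewrite [X in mob_add _ X]ea; apply: mob_add_lincomb.
- by rewrite -ea gt_eqF.
- by rewrite /d /mob_den !dotv_lincomb; field_invc2 c.
- by rewrite /d /mob_den !dotv_lincomb; field_invc2 c.
Qed.

Lemma mob_scaleE t a : a != 0 ->
  mob_scale c t a = tanhR (t * artanhR (enorm a / c)) *: ((c / enorm a) *: a).
Proof. by move=> a0; rewrite /mob_scale (negbTE a0) scalerA; congr (_ *: _); ring. Qed.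

Lemma mob_scale2 v : dotv v v < c ^+ 2 ->
  mob_scale c 2 v = (2 / (1 + dotv v v / c ^+ 2)) *: v.
Proof.
move=> vc; have [->|v0] := eqVneq v 0; first by rewrite /mob_scale eqxx scaler0.
have v_gt0 := enorm_gt0 v0.
have vc1 : -1 < enorm v / c < 1.
  by apply/andP; split; [have := divr_gt0 v_gt0 c_gt0; lra | rewrite ltr_pdivrMr // mul1r enorm_lt].
rewrite mob_scaleE // tanhR_2artanhR // -enorm_sqr scalerA.
by congr (_ *: _); field; nonzero.
Qed.

Lemma mob_coadd_diag v : dotv v v < c ^+ 2 -> mob_coadd c v v = mob_scale c 2 v.
Proof.
move=> vc; have c2 : 0 < c ^+ 2 := exprn_gt0 2 c_gt0.
have V1 : 0 < 1 - dotv v v / c ^+ 2 by rewrite subr_gt0 ltr_pdivrMr // mul1r.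
have V0 : 0 <= dotv v v / c ^+ 2 by rewrite divr_ge0 ?dotvv_ge0 ?ltW.
rewrite mob_coaddE // mob_scale2 // /lincomb; apply/rowP => i; rewrite !mxE.
by move: (dotv v v / c ^+ 2) V1 V0 => V V1 V0; field; nonzero.
Qed.

Lemma gyrolineE C D : dotv C C < c ^+ 2 -> dotv D D < c ^+ 2 -> C != D ->
  exists u al, [/\ dotv u u = c ^+ 2, 0 < al,
    gyroline c C D = (fun t => mob_add c C (tanhR (t * al) *: u))
    & D = mob_add c C (tanhR al *: u)].
Proof.
move=> Cc Dc CD; set a := mob_add c (- C) D.
have CaD : mob_add c C a = D by exact: mob_addNKr.
have a0 : a != 0 by apply: contraNneq CD => a0; rewrite -CaD a0 mob_addr0.
have a_gt0 := enorm_gt0 a0.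
have ac1 : 0 < enorm a / c < 1.
  rewrite divr_gt0 //= ltr_pdivrMr // mul1r enorm_lt //.
  by apply: mob_add_ball; rewrite ?dotvNN.
exists ((c / enorm a) *: a), (artanhR (enorm a / c)); split.
- by rewrite dotvZl dotvZr -enorm_sqr; field; nonzero.
- exact: artanhR_gt0.
- by apply/funext => t; rewrite /gyroline /mob_opp -/a mob_scaleE.
rewrite tanhR_artanhR; last by case/andP: ac1 => *; apply/andP; split; lra.
rewrite scalerA.
have -> : enorm a / c * (c / enorm a) = 1 by field; nonzero.
by rewrite scale1r.
Qed.

End MobiusAddition.

Section Gyroline.
Variables (R : realType) (n : nat) (c : R) (C u : 'rV[R]_n) (A X : R).
Hypotheses (c_gt0 : 0 < c) (uu : dotv u u = c ^+ 2).
Hypotheses (CC : dotv C C = A * c ^+ 2) (Cu : dotv C u = X * c ^+ 2) (A_lt1 : A < 1).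
Implicit Types x s : R.

(* [lra] ignores section hypotheses, so they are first copied into the goal context. *)
Local Ltac nonzero_gl := have := c_gt0; have := A_lt1; move=> ? ?; nonzero.

Definition chord_pt x := lincomb C u
  (2 * (1 + X * x) / (1 + A + 2 * X * x)) ((1 - A) * x / (1 + A + 2 * X * x)).

Lemma dotv_C_xu x : dotv (C + x *: u) (C + x *: u) = (A + 2 * X * x + x ^+ 2) * c ^+ 2.
Proof. by rewrite !(dotvDl, dotvDr, dotvZl, dotvZr) (dotvC u C) uu CC Cu; ring. Qed.

Lemma sqr_C_xu_ge0 x : 0 <= A + 2 * X * x + x ^+ 2.
Proof. by rewrite -(pmulr_lge0 _ (exprn_gt0 2 c_gt0)) -dotv_C_xu dotvv_ge0. Qed.

Lemma sqr_C_xu_gt0 x : x ^+ 2 = 1 -> 0 < A + 2 * X * x + x ^+ 2.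
Proof.
move=> x2; rewrite lt_def sqr_C_xu_ge0 andbT; apply/eqP => Cxu0.
have /dotvv_eq0 /eqP : dotv (C + x *: u) (C + x *: u) = 0 by rewrite dotv_C_xu Cxu0 mul0r.
rewrite addr_eq0 => /eqP CE.
have : A * c ^+ 2 = 1 * c ^+ 2 by rewrite -CC CE dotvNN dotvZl dotvZr uu mulrA -expr2 x2.
by move/(mulIf (lt0r_neq0 (exprn_gt0 2 c_gt0))) => A1; move: A_lt1; rewrite A1 ltxx.
Qed.

Lemma sqr_C_xu_wgt0 k x : 0 < k -> x ^+ 2 <= 1 -> 0 < k * (1 - x ^+ 2) + (A + 2 * X * x + x ^+ 2).
Proof.
move=> k_gt0 x1; have [x2|x2] := ltrP (x ^+ 2) 1; first by have := sqr_C_xu_ge0 x; nra.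
have x21 : x ^+ 2 = 1 by apply/eqP; rewrite eq_le x1 x2.
by have := sqr_C_xu_gt0 x21; rewrite x21 subrr mulr0 add0r.
Qed.

Lemma mob_den_Cxu_gt0 x : x ^+ 2 <= 1 -> 0 < 1 + 2 * X * x + A * x ^+ 2.
Proof.
move=> x1; rewrite (_ : 1 + 2 * X * x + A * x ^+ 2 = (1 - A) * (1 - x ^+ 2) + (A + 2 * X * x + x ^+ 2)).
  by apply: sqr_C_xu_wgt0; rewrite // subr_gt0.
by ring.
Qed.

Lemma chord_den_gt0 x : x ^+ 2 <= 1 -> 0 < 1 + A + 2 * X * x.
Proof.
move=> x1; rewrite (_ : 1 + A + 2 * X * x = 1 * (1 - x ^+ 2) + (A + 2 * X * x + x ^+ 2)).
  exact: sqr_C_xu_wgt0.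
by ring.
Qed.

Lemma mob_den_Cxu x : mob_den c C (x *: u) = 1 + 2 * X * x + A * x ^+ 2.
Proof. by rewrite /mob_den dotvZr dotvZl dotvZr uu Cu CC; field; nonzero_gl. Qed.

Lemma mob_add_Cxu x : mob_add c C (x *: u) = lincomb C u
  ((1 + 2 * X * x + x ^+ 2) / (1 + 2 * X * x + A * x ^+ 2))
  ((1 - A) * x / (1 + 2 * X * x + A * x ^+ 2)).
Proof.
rewrite mob_addE mob_den_Cxu dotvZr dotvZl dotvZr uu Cu CC.
have -> : 1 + 2 / c ^+ 2 * (x * (X * c ^+ 2)) + 1 / c ^+ 2 * (x * (x * c ^+ 2))
          = 1 + 2 * X * x + x ^+ 2 by field; nonzero_gl.
have -> : 1 - 1 / c ^+ 2 * (A * c ^+ 2) = 1 - A by field; nonzero_gl.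
by rewrite /lincomb scalerA; congr (_ + _ *: _); ring.
Qed.

Lemma C_ball : dotv C C < c ^+ 2.
Proof. by have := exprn_gt0 2 c_gt0; have := A_lt1; rewrite CC; nra. Qed.

Lemma xu_ball x : x ^+ 2 < 1 -> dotv (x *: u) (x *: u) < c ^+ 2.
Proof. by move=> x1; have := exprn_gt0 2 c_gt0; rewrite dotvZl dotvZr uu mulrA -expr2; nra. Qed.

Lemma dotv_mob_add_Cxu x : x ^+ 2 < 1 ->
  dotv (mob_add c C (x *: u)) (mob_add c C (x *: u)) / c ^+ 2
  = 1 - (1 - A) * (1 - x ^+ 2) / (1 + 2 * X * x + A * x ^+ 2).
Proof.
move=> x1; have := mob_add_ballE c_gt0 C_ball (xu_ball x1).
rewrite mob_den_Cxu CC dotvZl dotvZr uu => E.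
rewrite (_ : (1 - A) * (1 - x ^+ 2) = (1 - A * c ^+ 2 / c ^+ 2) * (1 - x * (x * c ^+ 2) / c ^+ 2)).
  by rewrite -E; ring.
by field; nonzero_gl.
Qed.

Lemma mob_add_Cxu_ball x : x ^+ 2 < 1 ->
  dotv (mob_add c C (x *: u)) (mob_add c C (x *: u)) < c ^+ 2.
Proof. by move=> x1; apply: (mob_add_ball c_gt0 C_ball (xu_ball x1)). Qed.

Lemma mob_coadd_C_Cxu x : x ^+ 2 < 1 -> mob_coadd c C (mob_add c C (x *: u)) = chord_pt x.
Proof.
move=> x1; have Q_gt0 := mob_den_Cxu_gt0 (ltW x1); have G_gt0 := chord_den_gt0 (ltW x1).
rewrite (mob_coaddE c_gt0 C_ball (mob_add_Cxu_ball x1)).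
rewrite dotv_mob_add_Cxu //.
have -> : dotv C C / c ^+ 2 = A by rewrite CC; field; nonzero_gl.
have AG_gt0 : 0 < (1 - A) * (1 + A + 2 * X * x) by rewrite mulr_gt0 // subr_gt0.
rewrite mob_add_Cxu /chord_pt /lincomb; apply/rowP => i; rewrite !mxE.
by field; nonzero_gl.
Qed.

Lemma mob_scale2_Cxu x : x ^+ 2 < 1 ->
  mob_scale c 2 (mob_add c C (x *: u)) = chord_pt (2 * x / (1 + x ^+ 2)).
Proof.
move=> x1; have Q_gt0 := mob_den_Cxu_gt0 (ltW x1).
have x2_gt0 : 0 < 1 + x ^+ 2 by rewrite ltr_wpDr ?sqr_ge0.
have y1 : (2 * x / (1 + x ^+ 2)) ^+ 2 <= 1.
  by rewrite expr_div_n ler_pdivrMr ?exprn_gt0 // mul1r !expr2; nra.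
have G_gt0 : 0 < (1 + A) * (1 + x ^+ 2) + 4 * X * x.
  have := mulr_gt0 (chord_den_gt0 y1) x2_gt0.
  rewrite (_ : (1 + A + 2 * X * (2 * x / (1 + x ^+ 2))) * (1 + x ^+ 2)
              = (1 + A) * (1 + x ^+ 2) + 4 * X * x) //.
  by field; nonzero_gl.
rewrite (mob_scale2 c_gt0 (mob_add_Cxu_ball x1)) dotv_mob_add_Cxu //.
rewrite mob_add_Cxu /chord_pt /lincomb; apply/rowP => i; rewrite !mxE.
by field; nonzero_gl.
Qed.

Lemma mob_add_C_unit s : s ^+ 2 = 1 -> mob_add c C (s *: u) = chord_pt s.
Proof.
move=> s2; have G_gt0 : 0 < 1 + A + 2 * X * s by apply: chord_den_gt0; rewrite s2.
rewrite mob_add_Cxu /chord_pt s2 /lincomb; apply/rowP => i; rewrite !mxE.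
by field; nonzero_gl.
Qed.

Lemma chord_den_pm1_gt0 : 0 < 1 + A + 2 * X /\ 0 < 1 + A - 2 * X.
Proof.
have := @chord_den_gt0 1; have := @chord_den_gt0 (-1).
by rewrite sqrrN expr1n mulr1 mulrN1 lexx => /(_ isT) ? /(_ isT).
Qed.

Lemma chord_ptE x : x ^+ 2 <= 1 ->
  chord_pt x = chord_pt (-1) + ((1 + A + 2 * X) * (1 + x) / (2 * (1 + A + 2 * X * x)))
                                *: (chord_pt 1 - chord_pt (-1)).
Proof.
move=> x1; have G_gt0 := chord_den_gt0 x1; have [G1 Gm] := chord_den_pm1_gt0.
by rewrite /chord_pt /lincomb; apply/rowP => i; rewrite !mxE; field; nonzero_gl.
Qed.

Lemma dotv_chord_pt_unit s : s ^+ 2 = 1 -> dotv (chord_pt s) (chord_pt s) = c ^+ 2.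
Proof.
move=> s2; have [G1 Gm] := chord_den_pm1_gt0.
have /orP[/eqP->|/eqP->] : (s == 1) || (s == -1) by rewrite -sqrf_eq1 s2.
- by rewrite /chord_pt dotv_lincomb uu CC Cu; field; nonzero_gl.
- by rewrite /chord_pt dotv_lincomb uu CC Cu; field; nonzero_gl.
Qed.

Lemma chord_ends_cross : 0 < c ^+ 2 - dotv (chord_pt (-1)) (chord_pt 1).
Proof.
have [G1 Gm] := chord_den_pm1_gt0; have c2 := exprn_gt0 2 c_gt0.
rewrite (_ : _ - _ = 2 * c ^+ 2 * (1 - A) ^+ 2 / ((1 + A + 2 * X) * (1 + A - 2 * X))).
  by rewrite divr_gt0 ?mulr_gt0 // subr_gt0.
by rewrite /chord_pt dotv_lincomb uu CC Cu; field; nonzero_gl.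
Qed.

Lemma chord_segment_lt s :
  (enorm (chord_pt (-1) + s *: (chord_pt 1 - chord_pt (-1))) < c) = (0 < s * (1 - s)).
Proof.
have E := @dotv_chord_pt_unit; have K := chord_ends_cross.
rewrite (enorm_lt _ c_gt0) (dotv_segment _ (E _ _) (E _ _)) ?sqrrN ?expr1n //.
by apply/idP/idP => h; nra.
Qed.

Lemma supp_chord_chord_pt x : x ^+ 2 < 1 ->
  supp_chord c (chord_pt (-1)) (chord_pt 1) (chord_pt x).
Proof.
move=> x1; have G_gt0 := chord_den_gt0 (ltW x1); have [G1 Gm] := chord_den_pm1_gt0.
rewrite (chord_ptE (ltW x1)); split; last by eexists.
rewrite chord_segment_lt; apply: mulr_gt0.
  by rewrite divr_gt0 ?mulr_gt0 //; nra.
rewrite (_ : 1 - _ = (1 + A - 2 * X) * (1 - x) / (2 * (1 + A + 2 * X * x))).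
  by rewrite divr_gt0 ?mulr_gt0 //; nra.
by field; nonzero_gl.
Qed.

Lemma chord_pt_surj s : 0 < s < 1 -> exists2 x, x ^+ 2 < 1 &
  chord_pt x = chord_pt (-1) + s *: (chord_pt 1 - chord_pt (-1)).
Proof.
case/andP => s0 s1; have [G1 Gm] := chord_den_pm1_gt0.
have a1 : 0 < s * (1 + A - 2 * X) by exact: mulr_gt0.
have a2 : 0 < (1 - s) * (1 + A + 2 * X) by rewrite mulr_gt0 // subr_gt0.
pose x := (s * (1 + A - 2 * X) - (1 - s) * (1 + A + 2 * X))
          / (s * (1 + A - 2 * X) + (1 - s) * (1 + A + 2 * X)).
have x1 : x ^+ 2 < 1.
  by rewrite expr_div_n ltr_pdivrMr ?exprn_gt0 ?addr_gt0 // mul1r !expr2; nra.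
exists x => //; rewrite (chord_ptE (ltW x1)); congr (_ + _ *: _).
by rewrite /x; field; nonzero_gl.
Qed.

Lemma supp_chord_coadd_C x : x ^+ 2 < 1 ->
  supp_chord c (chord_pt (-1)) (chord_pt 1) (mob_coadd c C (mob_add c C (x *: u))).
Proof. by move=> x1; rewrite mob_coadd_C_Cxu //; exact: supp_chord_chord_pt. Qed.

Lemma supp_chord_coadd_diag x : x ^+ 2 < 1 ->
  supp_chord c (chord_pt (-1)) (chord_pt 1)
    (mob_coadd c (mob_add c C (x *: u)) (mob_add c C (x *: u))).
Proof.
move=> x1; rewrite (mob_coadd_diag c_gt0 (mob_add_Cxu_ball x1)) mob_scale2_Cxu //.
apply: supp_chord_chord_pt; have x2_gt0 : 0 < 1 + x ^+ 2 by rewrite ltr_wpDr ?sqr_ge0.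
by rewrite expr_div_n ltr_pdivrMr ?exprn_gt0 // mul1r !expr2; nra.
Qed.

Lemma supp_chord_range (al : R) : 0 < al ->
  supp_chord c (chord_pt (-1)) (chord_pt 1)
  = range (fun t => mob_coadd c C (mob_add c C (tanhR (t * al) *: u))).
Proof.
move=> al0; apply/seteqP; split=> [z [zc [s zE]]|_ [t _ <-]].
- move: zc; rewrite zE chord_segment_lt => s01.
  have [|x x1 xE] := @chord_pt_surj s; first by apply/andP; split; nra.
  exists (artanhR x / al) => //; rewrite -xE.
  by rewrite divfK ?gt_eqF // tanhR_artanhR ?mob_coadd_C_Cxu //; apply/andP; split; nra.
- exact/supp_chord_coadd_C/tanhR_sqr_lt1.
Qed.

Lemma mob_add_Cxu_cvg (T : Type) (F : set_system T) {FF : Filter F} (g : T -> R) (l : R) :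
  l ^+ 2 <= 1 -> g @ F --> l -> mob_add c C (g t *: u) @[t --> F] --> mob_add c C (l *: u).
Proof.
move=> l1 gl; have Q_gt0 := mob_den_Cxu_gt0 l1.
rewrite (_ : (fun t => _) = fun t => lincomb C u
    ((1 + 2 * X * g t + g t ^+ 2) / (1 + 2 * X * g t + A * g t ^+ 2))
    ((1 - A) * g t / (1 + 2 * X * g t + A * g t ^+ 2))); last first.
  by apply/funext => t; rewrite mob_add_Cxu.
rewrite mob_add_Cxu.
have g2 : g t ^+ 2 @[t --> F] --> l ^+ 2 := cvgM gl gl.
have cK (k : R) (h : T -> R) (m : R) : h @ F --> m -> (k * h t) @[t --> F] --> k * m.
  by move=> hm; apply: cvgM hm; exact: cvg_cst.
have Q2 : (1 + 2 * X * g t + A * g t ^+ 2) @[t --> F] --> 1 + 2 * X * l + A * l ^+ 2.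
  by apply: cvgD; [apply: cvgD; [exact: cvg_cst | exact: (cK _ _ _ gl)] | apply: cK; exact: g2].
have N2 : (1 + 2 * X * g t + g t ^+ 2) @[t --> F] --> 1 + 2 * X * l + l ^+ 2.
  by apply: cvgD; [apply: cvgD; [exact: cvg_cst | exact: (cK _ _ _ gl)] | exact: g2].
have Qg := cvgV (lt0r_neq0 Q_gt0) Q2.
by apply: cvgD; apply: cvgZ; try exact: cvg_cst; apply: cvgM => //; [exact: Qg | exact: (cK _ _ _ gl) | exact: Qg].
Qed.

Lemma mob_add_C_tanh_cvgy (al : R) : 0 < al ->
  mob_add c C (tanhR (t * al) *: u) @[t --> +oo] --> chord_pt 1.
Proof.
move=> al0; rewrite -mob_add_C_unit ?expr1n //; apply: mob_add_Cxu_cvg; first by rewrite expr1n.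
have tal : (t * al) @[t --> +oo] --> +oo.
  by under eq_fun do rewrite mulrC; exact: gt0_cvgMry al0 cvg_id.
exact: (cvg_comp _ _ tal (@tanhR_cvgy R)).
Qed.

Lemma mob_add_C_tanh_cvgNy (al : R) : 0 < al ->
  mob_add c C (tanhR (t * al) *: u) @[t --> -oo] --> chord_pt (-1).
Proof.
move=> al0; rewrite -mob_add_C_unit ?sqrrN ?expr1n //.
apply: mob_add_Cxu_cvg; first by rewrite sqrrN expr1n.
have tal : (t * al) @[t --> -oo] --> -oo.
  by under eq_fun do rewrite mulrC; exact: gt0_cvgMrNy al0 cvg_id.
exact: (cvg_comp _ _ tal (@tanhR_cvgNy R)).
Qed.

End Gyroline.

Theorem theorem3 (R : realType) (n : nat) (c : R) (C D : 'rV[R]_n) :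
  0 < c -> (2 <= n)%N ->
  enorm C < c -> enorm D < c -> C != D ->
  exists E1 E2 : 'rV[R]_n,
    [/\ gyroline c C D t @[t --> -oo] --> E1,
        gyroline c C D t @[t --> +oo] --> E2,
        supp_chord c E1 E2 = range (fun t : R => mob_coadd c C (gyroline c C D t))
      & [/\ mob_coadd c C C = mob_scale c 2 C /\ supp_chord c E1 E2 (mob_coadd c C C),
            mob_coadd c D D = mob_scale c 2 D /\ supp_chord c E1 E2 (mob_coadd c D D)
          & supp_chord c E1 E2 (mob_coadd c C D)]].
Proof.
move=> c_gt0 _; rewrite !(enorm_lt _ c_gt0) => Cc Dc CD.
have [u [al [uu al_gt0 -> DE]]] := gyrolineE c_gt0 Cc Dc CD.
have c2 : c ^+ 2 != 0 by rewrite gt_eqF ?exprn_gt0.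
have CC : dotv C C = dotv C C / c ^+ 2 * c ^+ 2 by rewrite divfK.
have Cu : dotv C u = dotv C u / c ^+ 2 * c ^+ 2 by rewrite divfK.
have A_lt1 : dotv C C / c ^+ 2 < 1 by rewrite ltr_pdivrMr ?exprn_gt0 // mul1r.
have y1 := tanhR_sqr_lt1 al.
exists (chord_pt C u (dotv C C / c ^+ 2) (dotv C u / c ^+ 2) (-1)),
       (chord_pt C u (dotv C C / c ^+ 2) (dotv C u / c ^+ 2) 1).
split.
- exact: (mob_add_C_tanh_cvgNy c_gt0 uu CC Cu A_lt1 al_gt0).
- exact: (mob_add_C_tanh_cvgy c_gt0 uu CC Cu A_lt1 al_gt0).
- exact: (supp_chord_range c_gt0 uu CC Cu A_lt1 al_gt0).
have C0 : C = mob_add c C (0 *: u) by rewrite scale0r mob_addr0.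
split; [split | split |].
- exact: mob_coadd_diag.
- rewrite [X in mob_coadd _ _ X]C0.
  by apply: (supp_chord_coadd_C c_gt0 uu CC Cu A_lt1); rewrite expr0n.
- exact: mob_coadd_diag.
- by rewrite DE; apply: (supp_chord_coadd_diag c_gt0 uu CC Cu A_lt1).
- by rewrite DE; apply: (supp_chord_coadd_C c_gt0 uu CC Cu A_lt1).
Qed.
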